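(* For every integer $t\ge 0$: $$A_3(9t+4,6,[3,1])\le 9t^2+6t+1+\left\lfloor\tfrac{t}{4}\right\rfloor,\quad A_3(9t+5,6,[3,1])\le 9t^2+7t+1+\left\lfloor\tfrac{t+1}{4}\right\rfloor,\quad A_3(9t+7,6,[3,1])\le 9t^2+11t+3+\left\lfloor\tfrac{t+1}{2}\right\rfloor.$$
   Context: For a finite set $X$ with $|X|=n$, a ternary code of length $n$ is a subset $\mathcal C\subseteq\mathbb Z_3^X$; its elements are codewords. The Hamming distance between $u,v\in\mathbb Z_3^X$ is the number of $x\in X$ with $u_x\ne v_x$. A vector $u$ has composition $[w_1,w_2]$ if exactly $w_1$ of its coordinates equal $1$ and exactly $w_2$ equal $2$ (all others $0$). An $(n,d,[w_1,w_2])_3$-code is a ternary code of length $n$ in which every codeword has composition $[w_1,w_2]$ and any two distinct codewords are at Hamming distance at least $d$. $A_3(n,d,[w_1,w_2])$ denotes the maximum number of codewords of an $(n,d,[w_1,w_2])_3$-code. *)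

From mathcomp Require Import all_boot.
Set Implicit Arguments. Unset Strict Implicit. Unset Printing Implicit Defensive.

Definition word (n : nat) := {ffun 'I_n -> 'I_3}.

Definition hdist n (u v : word n) : nat := #|[set x : 'I_n | u x != v x]|.

Definition wcount n (u : word n) (a : nat) : nat := #|[set x : 'I_n | nat_of_ord (u x) == a]|.

Definition has_composition n (u : word n) (w1 w2 : nat) : bool :=
  (wcount u 1 == w1) && (wcount u 2 == w2).

Definition is_const_comp_code n d w1 w2 (C : {set word n}) : bool :=
  [forall u in C, has_composition u w1 w2] &&
  [forall u in C, forall v in C, (u != v) ==> (d <= hdist u v)].

Definition A3 n d w1 w2 : nat :=
  \max_(C : {set word n} | is_const_comp_code d w1 w2 C) #|C|.

From mathcomp Require Import all_boot zify.
Set Implicit Arguments. Unset Strict Implicit. Unset Printing Implicit Defensive.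

(* Each codeword has weight 4, so 4 |C| is the sum over the
   coordinates x of the number of codewords that are nonzero at x. Fix x, and
   let r (resp. s) codewords carry a 1 (resp. a 2) at x. Two codewords of
   weight 4 agreeing on a common nonzero entry and sharing one more support
   position are at distance at most 5, so distance 6 forces them to be equal.
   Hence the supports minus x of the r words with a 1 at x are pairwise
   disjoint, giving 3r <= n - 1, and the positions of the 1s outside x of all
   r + s words nonzero at x are pairwise disjoint, giving 2r + 3s <= n - 1.
   So 4 |C| <= n D for any D bounding r + s under these two constraints. *)

Lemma card_sum_in (T : finType) (A : {pred T}) : #|A| = \sum_x (x \in A).
Proof. by rewrite -sum1_card big_mkcond; apply: eq_bigr => x _; case: (x \in A). Qed.

Lemma sum_card_disjoint_leq (I T : finType) (P : pred I) (F : I -> {set T})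
    (A : {set T}) :
  (forall i, P i -> F i \subset A) ->
  (forall i j y, P i -> P j -> y \in F i -> y \in F j -> i = j) ->
  \sum_(i | P i) #|F i| <= #|A|.
Proof.
move=> FA Fdisj; rewrite (card_sum_in A).
under eq_bigr => i _ do rewrite card_sum_in.
rewrite exchange_big /=; apply: leq_sum => y _.
case: (pickP [pred i | P i && (y \in F i)]) => [i0 /andP[Pi0 yFi0] | noF].
  rewrite (bigD1 i0) //= yFi0 (subsetP (FA i0 Pi0) y yFi0) big1 // => j /andP[Pj ji0].
  by apply/eqP; rewrite eqb0; apply: contra ji0 => yFj; rewrite (Fdisj j i0 y).
by rewrite big1 // => i Pi; have /= := noF i; rewrite Pi /= => ->.
Qed.

Section Words.

Variable n : nat.
Implicit Types (u v : word n) (a b : 'I_n).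

Definition wsupp u := [set i | u i != 0 :> nat].
Definition wlevel u (k : nat) := [set i | u i == k :> nat].

Lemma ord3_cases (k : 'I_3) : [\/ k = 0 :> nat, k = 1 :> nat | k = 2 :> nat].
Proof. by case: k => [[|[|[|m]]] lt_k3] //=; [constructor | constructor 2 | constructor 3]. Qed.

Lemma card_wsupp u w1 w2 : has_composition u w1 w2 -> #|wsupp u| = w1 + w2.
Proof.
case/andP => /eqP <- /eqP <-.
have -> : wsupp u = wlevel u 1 :|: wlevel u 2.
  by apply/setP => i; rewrite !inE; case: (ord3_cases (u i)) => ->.
rewrite cardsU; have -> : wlevel u 1 :&: wlevel u 2 = set0.
  by apply/setP => i; rewrite !inE; case: (ord3_cases (u i)) => ->.
by rewrite cards0 subn0.
Qed.

Lemma hdist_common_supp u v a b :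
  a != b -> a \in wsupp u :&: wsupp v -> b \in wsupp u :&: wsupp v -> u a = v a ->
  hdist u v + 3 <= #|wsupp u| + #|wsupp v|.
Proof.
move=> neq_ab a_uv b_uv eq_uva.
have diff_sub : [set i | u i != v i] \subset (wsupp u :|: wsupp v) :\ a.
  apply/subsetP => i; rewrite !inE => neq_uvi; apply/andP; split.
    by apply: contraNneq neq_uvi => ->; rewrite eq_uva.
  apply: contraNT neq_uvi; rewrite negb_or !negbK => /andP[/eqP ui0 /eqP vi0].
  by apply/eqP/ord_inj; rewrite ui0 vi0.
have two_common : 2 <= #|wsupp u :&: wsupp v|.
  have <- : #|[set a; b]| = 2 by rewrite cards2 neq_ab.
  apply: subset_leq_card; apply/subsetP => i.
  by case/set2P => ->.
have a_U : a \in wsupp u :|: wsupp v by move: a_uv; rewrite !inE => /andP[->].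
have := subset_leq_card diff_sub; rewrite -/(hdist u v).
have := cardsD1 a (wsupp u :|: wsupp v); rewrite a_U.
have := cardsUI (wsupp u) (wsupp v); lia.
Qed.

End Words.

Section ConstantCompositionCode.

Variables (n : nat) (C : {set word n}).
Hypothesis codeC : is_const_comp_code 6 3 1 C.
Implicit Types (u v : word n) (x : 'I_n).

Lemma code_comp u : u \in C -> has_composition u 3 1.
Proof. by case/andP: codeC => /forall_inP compC _ /compC. Qed.

Lemma code_eq_common_supp u v a b : u \in C -> v \in C -> a != b ->
  a \in wsupp u :&: wsupp v -> b \in wsupp u :&: wsupp v -> u a = v a -> u = v.
Proof.
move=> uC vC neq_ab a_uv b_uv eq_uva; apply/eqP; apply: contraT => neq_uv.
have := hdist_common_supp neq_ab a_uv b_uv eq_uva.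
rewrite (card_wsupp (code_comp uC)) (card_wsupp (code_comp vC)).
case/andP: codeC => _ /forall_inP/(_ u uC)/forall_inP/(_ v vC)/implyP/(_ neq_uv).
lia.
Qed.

Definition level_count x (k : nat) := \sum_(u in C) (u x == k :> nat).

Lemma level_count1_bound x : 3 * level_count x 1 <= n.-1.
Proof.
pose F u := if u x == 1 :> nat then wsupp u :\ x else set0.
have card_F u : u \in C -> #|F u| = 3 * (u x == 1 :> nat).
  move=> uC; rewrite /F; case: ifP => [/eqP ux1 | _]; last by rewrite cards0.
  by have := cardsD1 x (wsupp u); rewrite (card_wsupp (code_comp uC)) inE ux1 => -[].
have := @sum_card_disjoint_leq _ _ (mem C) F [set~ x].
rewrite cardsC1 card_ord (eq_bigr _ card_F) -big_distrr; apply.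
  by move=> u _; rewrite /F; case: ifP => _; apply/subsetP => y; rewrite !inE // => /andP[].
move=> u v y uC vC; rewrite /F; case: ifP => [/eqP ux1 | _ /[!in_set0] //].
case: ifP => [/eqP vx1 | _ _ /[!in_set0] //].
rewrite !inE => /andP[neq_yx uy] /andP[_ vy].
apply: (code_eq_common_supp uC vC (a := x) (b := y)); rewrite 1?eq_sym ?inE ?ux1 ?vx1 ?uy ?vy //.
by apply: ord_inj; rewrite ux1 vx1.
Qed.

Lemma level_count12_bound x : 2 * level_count x 1 + 3 * level_count x 2 <= n.-1.
Proof.
pose F u := if u x != 0 :> nat then wlevel u 1 :\ x else set0.
have card_F u : u \in C -> #|F u| = 2 * (u x == 1 :> nat) + 3 * (u x == 2 :> nat).
  move=> uC; have /andP[/eqP wlevel1 _] := code_comp uC.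
  have := cardsD1 x (wlevel u 1); rewrite [#|wlevel u 1|]wlevel1 /F inE.
  by case: (ord3_cases (u x)) => -> /=; rewrite ?cards0 //; lia.
have := @sum_card_disjoint_leq _ _ (mem C) F [set~ x].
rewrite cardsC1 card_ord (eq_bigr _ card_F) big_split -!big_distrr; apply.
  by move=> u _; rewrite /F; case: ifP => _; apply/subsetP => y; rewrite !inE // => /andP[].
move=> u v y uC vC; rewrite /F; case: ifP => [ux0 | _ /[!in_set0] //].
case: ifP => [vx0 | _ _ /[!in_set0] //].
rewrite !inE => /andP[neq_yx /eqP uy1] /andP[_ /eqP vy1].
apply: (code_eq_common_supp uC vC (a := y) (b := x)); rewrite ?inE ?uy1 ?vy1 ?ux0 ?vx0 //.
by apply: ord_inj; rewrite uy1 vy1.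
Qed.

Lemma card_code_double_count : 4 * #|C| = \sum_x (level_count x 1 + level_count x 2).
Proof.
rewrite -sum1_card big_distrr /=.
transitivity (\sum_(u in C) \sum_x (u x != 0 :> nat)).
  apply: eq_bigr => u uC; rewrite muln1 -[4]/(3 + 1) -(card_wsupp (code_comp uC)).
  by rewrite card_sum_in; apply: eq_bigr => x _; rewrite inE.
rewrite exchange_big; apply: eq_bigr => x _; rewrite -big_split.
by apply: eq_bigr => u _; case: (ord3_cases (u x)) => ->.
Qed.

End ConstantCompositionCode.

Lemma A3_d6_31_leq n D :
  (forall r s, 3 * r <= n.-1 -> 2 * r + 3 * s <= n.-1 -> r + s <= D) ->
  A3 n 6 3 1 <= n * D %/ 4.
Proof.
move=> maxD; apply/bigmax_leqP => C codeC; rewrite leq_divRL // mulnC.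
rewrite (card_code_double_count codeC) -[n in n * D]card_ord -sum_nat_const.
apply: leq_sum => x _; apply: maxD.
- exact: level_count1_bound.
- exact: level_count12_bound.
Qed.

Theorem mainTheorem3 (t : nat) :
  [/\ A3 (9 * t + 4) 6 3 1 <= 9 * t ^ 2 + 6 * t + 1 + t %/ 4,
      A3 (9 * t + 5) 6 3 1 <= 9 * t ^ 2 + 7 * t + 1 + (t + 1) %/ 4
    & A3 (9 * t + 7) 6 3 1 <= 9 * t ^ 2 + 11 * t + 3 + (t + 1) %/ 2].
Proof.
split.
- apply: (leq_trans (A3_d6_31_leq (D := 4 * t + 1) _)); [move=> r s; lia | lia].
- apply: (leq_trans (A3_d6_31_leq (D := 4 * t + 1) _)); [move=> r s; lia | lia].
- apply: (leq_trans (A3_d6_31_leq (D := 4 * t + 2) _)); [move=> r s; lia | lia].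
Qed.
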